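(* If $\sigma$ is a nonempty right closed subset of $\mathbb{R}$, then there exists a sequence $\{r_n\}_{n\ge1}$ whose right closure is $\sigma$.
   Context: A nonempty set $X\subseteq\mathbb{R}$ is right closed if $\sup Y\in X$ for every nonempty bounded $Y\subseteq X$. For nonempty $K\subseteq\mathbb{R}$, its right closure is $\lceil K\rceil=\{\sup\sigma':\emptyset\neq\sigma'\subseteq K,\ \sigma'\text{ bounded}\}$, the smallest right closed set containing $K$. *)

From Stdlib Require Import Reals.
Open Scope R_scope.

Definition nonempty (X : R -> Prop) : Prop := exists x, X x.

Definition bounded (X : R -> Prop) : Prop :=
  (exists M, forall x, X x -> x <= M) /\ (exists m, forall x, X x -> m <= x).

Definition subset (Y X : R -> Prop) : Prop := forall x, Y x -> X x.

Definition right_closed (X : R -> Prop) : Prop :=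
  nonempty X /\
  forall Y : R -> Prop, subset Y X -> nonempty Y -> bounded Y ->
    forall s, is_lub Y s -> X s.

Definition right_closure (K : R -> Prop) : R -> Prop :=
  fun x => exists Y : R -> Prop,
    subset Y K /\ nonempty Y /\ bounded Y /\ is_lub Y x.

From Stdlib Require Import Reals Lra Lia ZArith ClassicalEpsilon Cantor.
Open Scope R_scope.

(* Since sigma is right closed, the right closure of a sequence in sigma is
   all of sigma as soon as every x in sigma is a limit from the left of terms
   lying below or at x.  For rationals u and v, choose a point of sigma in
   [u, v] when there is one, and the least point of sigma above u when it
   exists.  Given x in sigma and a rational u just below x, either sigma meets
   [u, x), and then the choice for some [u, v] with v < x lies in [u, x), or
   it does not, and then x itself is the least point of sigma above u. *)

Definition dense_seq (q : nat -> R) : Prop :=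
  forall a b, a < b -> exists m, a < q m < b.

Definition rat_enum (m : nat) : R :=
  let (a, w) := of_nat m in let (b, c) := of_nat w in (INR a - INR b) / INR c.

Lemma IZR_INR_diff (z : Z) : IZR z = INR (Z.to_nat z) - INR (Z.to_nat (- z)).
Proof. rewrite !INR_IZR_INZ, <- minus_IZR; f_equal; lia. Qed.

(* [up (a N) / N] lies in [(a, a + 1/N]], and [1/N < b - a]. *)
Lemma rat_enum_dense : dense_seq rat_enum.
Proof.
  intros a b Hab.
  destruct (archimed_cor1 (b - a)) as [N [HN HN0]]; [lra|].
  assert (HNpos : 0 < INR N) by (apply lt_0_INR; lia).
  destruct (archimed (a * INR N)) as [Hup_gt Hup_le].
  set (z := up (a * INR N)) in *.
  exists (to_nat (Z.to_nat z, to_nat (Z.to_nat (- z), N))).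
  unfold rat_enum; rewrite !cancel_of_to, <- IZR_INR_diff.
  assert (HNinv : / INR N * INR N = 1) by (apply Rinv_l; lra).
  assert (Hgap : / INR N * INR N < (b - a) * INR N)
    by (apply Rmult_lt_compat_r; lra).
  split; apply Rmult_lt_reg_r with (INR N); auto;
    unfold Rdiv; rewrite Rmult_assoc, HNinv; lra.
Qed.

Definition choose_in (S P : R -> Prop) : R :=
  epsilon (inhabits 0) (fun m => S m /\ ((exists y, S y /\ P y) -> P m)).

Lemma choose_in_correct (S P : R -> Prop) : nonempty S ->
  S (choose_in S P) /\ ((exists y, S y /\ P y) -> P (choose_in S P)).
Proof.
  intros [s Hs].
  apply (epsilon_spec (inhabits 0) (fun m => S m /\ ((exists y, S y /\ P y) -> P m))).
  destruct (classic (exists y, S y /\ P y)) as [[y Hy]|Hnone].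
  - exists y; tauto.
  - exists s; tauto.
Qed.

Lemma choose_in_mem (S P : R -> Prop) : nonempty S -> S (choose_in S P).
Proof. intros HS; apply (choose_in_correct S P HS). Qed.

Lemma choose_in_spec (S P : R -> Prop) :
  (exists y, S y /\ P y) -> P (choose_in S P).
Proof.
  intros [y Hy]; apply (choose_in_correct S P); [exists y | exists y]; tauto.
Qed.

Lemma right_closure_sub (K X : R -> Prop) :
  right_closed X -> subset K X -> subset (right_closure K) X.
Proof.
  intros [_ HX] HKX x [Y [HYK [HYne [HYbd HYx]]]].
  apply (HX Y); auto.
  intros y Hy; auto.
Qed.

Lemma right_closure_left_limit (K : R -> Prop) (x : R) :
  (forall eps, 0 < eps -> exists k, K k /\ x - eps < k <= x) ->
  right_closure K x.
Proof.
  intros Happrox.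
  exists (fun y => K y /\ x - 1 < y <= x).
  split; [intros y [Hy _]; exact Hy|].
  split.
  { destruct (Happrox 1) as [k Hk]; [lra|]. exists k; exact Hk. }
  split.
  { split; [exists x | exists (x - 1)]; intros y [_ Hy]; lra. }
  split; [intros y [_ Hy]; lra|].
  intros b Hb; destruct (Rle_or_lt x b) as [|Hbx]; auto.
  destruct (Happrox (Rmin 1 (x - b))) as [k [Hk Hkx]];
    [apply Rmin_glb_lt; lra|].
  assert (Hmin1 := Rmin_l 1 (x - b)); assert (Hmin2 := Rmin_r 1 (x - b)).
  assert (k <= b) by (apply Hb; split; [exact Hk | lra]).
  lra.
Qed.

Section LeftApproximatingSequence.

Variables (sigma : R -> Prop) (q : nat -> R).
Hypotheses (sigma_nonempty : nonempty sigma) (q_dense : dense_seq q).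

Definition least_above (p m : R) : Prop :=
  p <= m /\ forall z, sigma z -> p <= z -> m <= z.

Definition approx_seq (n : nat) : R :=
  let (u, v) := of_nat n in
  match v with
  | O => choose_in sigma (least_above (q u))
  | S v => choose_in sigma (fun m => q u <= m <= q v)
  end.

Lemma approx_seq_mem (n : nat) : sigma (approx_seq n).
Proof.
  unfold approx_seq; destruct (of_nat n) as [u [|v]];
    exact (choose_in_mem _ _ sigma_nonempty).
Qed.

Lemma approx_seq_left_limit (x eps : R) :
  sigma x -> 0 < eps -> exists n, x - eps < approx_seq n <= x.
Proof.
  intros Hx Heps.
  destruct (q_dense (x - eps) x) as [u Hu]; [lra|].
  destruct (classic (exists y, sigma y /\ q u <= y < x)) as [[y [Hy Hyx]]|Hgap].
  - destruct (q_dense y x) as [v Hv]; [lra|].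
    exists (to_nat (u, S v)); unfold approx_seq; rewrite cancel_of_to.
    assert (Hm : q u <= choose_in sigma (fun m => q u <= m <= q v) <= q v)
      by (apply choose_in_spec; exists y; split; [exact Hy | lra]).
    lra.
  - assert (Hleast : least_above (q u) x).
    { split; [lra|]. intros z Hz Huz.
      destruct (Rle_or_lt x z); auto.
      exfalso; apply Hgap; exists z; split; [exact Hz | lra]. }
    exists (to_nat (u, O)); unfold approx_seq; rewrite cancel_of_to.
    destruct (choose_in_spec sigma (least_above (q u))) as [Hum Hmin];
      [exists x; auto|].
    specialize (Hmin x Hx (proj1 Hleast)).
    lra.
Qed.

End LeftApproximatingSequence.

Theorem lemma3p7 (sigma : R -> Prop) :
  nonempty sigma -> right_closed sigma ->
  exists r : nat -> R,
    forall x, right_closure (fun y => exists n : nat, r n = y) x <-> sigma x.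
Proof.
  intros Hne Hrc.
  exists (approx_seq sigma rat_enum); intros x; split.
  - apply right_closure_sub; auto.
    intros y [n <-]; apply approx_seq_mem; exact Hne.
  - intros Hx; apply right_closure_left_limit; intros eps Heps.
    destruct (approx_seq_left_limit sigma rat_enum rat_enum_dense x eps Hx Heps)
      as [n Hn].
    exists (approx_seq sigma rat_enum n); split; eauto.
Qed.
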